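(* Let $P\subset\mathbb{R}^2$ be a finite set of $n\ge 1$ points. Then there exists $p\in P$ such that $p\in T$ for every downward facing equilateral triangle $T$ with $|T\cap P|>\frac{2n}{3}$.
   Context: A downward facing equilateral triangle is a closed (filled) equilateral triangle in $\mathbb{R}^2$ having one side parallel to the $x$-axis and the vertex opposite to that side lying strictly below the line containing that side. Equivalently, it is a set of the form $\bigcap_{i=1}^3\{x:\langle u_i,x\rangle\le t_i\}$ with nonempty interior, where $u_1,u_2,u_3$ are the unit vectors making angles $90^\circ,210^\circ,330^\circ$ with the positive $x$-axis and $t_1,t_2,t_3\in\mathbb{R}$. *)

From Stdlib Require Import Reals Lra List.
Import ListNotations.
Open Scope R_scope.

Definition pt := (R * R)%type.

Definition dot (u x : pt) : R := fst u * fst x + snd u * snd x.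

(* unit vectors at angles 90, 210, 330 degrees *)
Definition u1 : pt := (0, 1).
Definition u2 : pt := (- (sqrt 3 / 2), - (1 / 2)).
Definition u3 : pt := (sqrt 3 / 2, - (1 / 2)).

Definition in_tri (t1 t2 t3 : R) (x : pt) : Prop :=
  dot u1 x <= t1 /\ dot u2 x <= t2 /\ dot u3 x <= t3.

Definition in_trib (t1 t2 t3 : R) (x : pt) : bool :=
  if Rle_dec (dot u1 x) t1 then
    if Rle_dec (dot u2 x) t2 then
      if Rle_dec (dot u3 x) t3 then true else false
    else false
  else false.

Definition nonempty_interior (t1 t2 t3 : R) : Prop :=
  exists (c : pt) (eps : R), 0 < eps /\
    forall x : pt, (fst x - fst c)^2 + (snd x - snd c)^2 < eps^2 -> in_tri t1 t2 t3 x.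

Definition down_triangle (t1 t2 t3 : R) : Prop := nonempty_interior t1 t2 t3.

(* |T ∩ P| for P given as a duplicate-free list *)
Definition count_in (t1 t2 t3 : R) (P : list pt) : nat :=
  length (filter (in_trib t1 t2 t3) P).

(* A downward triangle is an intersection of three half-planes
   {x : <u_k, x> <= t_k} with fixed normals u_1, u_2, u_3.  Call a triangle
   heavy if it contains more than 2n/3 points of P.  For each direction k we
   choose, among heavy triangles, one (A_k) whose points of P reach the least
   possible height v_k in direction u_k; since every heavy triangle contains a
   point of P of height at least v_k, its parameter t_k is at least v_k.
   The three heavy triangles A_1, A_2, A_3 share a point p of P (three sets
   each missing fewer than n/3 points cannot jointly miss all n points), and
   <u_k, p> <= v_k <= t_k for every heavy triangle, i.e. p lies in all of them. *)

From Stdlib Require Import Reals List.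
From Stdlib Require Import Lra Lia Classical.
Import ListNotations.
Open Scope bool_scope.
Open Scope R_scope.

Lemma least_value_attained (L : list R) (Q : R -> Prop) :
  (exists v, In v L /\ Q v) ->
  exists v, In v L /\ Q v /\ forall w, In w L -> Q w -> v <= w.
Proof.
  induction L as [|a L IH]; intros [v [Hv HQ]]; [destruct Hv|].
  destruct (classic (exists w, In w L /\ Q w)) as [Htail|Htail].
  - destruct (IH Htail) as [m [Hm [HQm Hmin]]].
    destruct (classic (Q a /\ a <= m)) as [[HQa Ham]|Ha].
    + exists a; repeat split; [left; reflexivity | assumption |].
      intros w [<-|Hw] HQw; [lra|]. specialize (Hmin w Hw HQw); lra.
    + exists m; repeat split; [right; assumption | assumption |].
      intros w [<-|Hw] HQw; [|auto]. apply Rnot_lt_le; intro; apply Ha; split; [assumption | lra].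
  - destruct Hv as [<-|Hv]; [|exfalso; apply Htail; eauto].
    exists a; repeat split; [left; reflexivity | assumption |].
    intros w [<-|Hw] HQw; [lra | exfalso; apply Htail; eauto].
Qed.

Lemma argmax_exists {A : Type} (L : list A) (h : A -> R) :
  L <> [] -> exists x, In x L /\ forall y, In y L -> h y <= h x.
Proof.
  induction L as [|a L IH]; intros Hne; [congruence|].
  destruct L as [|b L'].
  - exists a; split; [left; reflexivity|]. intros y [<-|[]]; lra.
  - destruct IH as [x [Hx Hmax]]; [discriminate|].
    destruct (Rle_dec (h a) (h x)).
    + exists x; split; [right; assumption|]. intros y [<-|Hy]; [lra | auto].
    + exists a; split; [left; reflexivity|]. intros y [<-|Hy]; [lra|].
      specialize (Hmax y Hy); lra.
Qed.

Lemma count_inter_lower {A : Type} (a b : A -> bool) (L : list A) :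
  (length (filter (fun x => a x && b x) L) + length L >=
   length (filter a L) + length (filter b L))%nat.
Proof.
  induction L as [|x L IH]; simpl; [lia|].
  destruct (a x), (b x); simpl; lia.
Qed.

Lemma three_majorities_meet {A : Type} (L : list A) (a b c : A -> bool) :
  (3 * length (filter a L) > 2 * length L)%nat ->
  (3 * length (filter b L) > 2 * length L)%nat ->
  (3 * length (filter c L) > 2 * length L)%nat ->
  exists x, In x L /\ a x = true /\ b x = true /\ c x = true.
Proof.
  intros Ha Hb Hc.
  pose proof (count_inter_lower a b L) as Hab.
  pose proof (count_inter_lower (fun x => a x && b x) c L) as Habc.
  destruct (filter (fun x => (a x && b x) && c x) L) as [|x F] eqn:Hmeet.
  - simpl in Habc; lia.
  - assert (Hx : In x (filter (fun x => (a x && b x) && c x) L))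
      by (rewrite Hmeet; left; reflexivity).
    apply filter_In in Hx as [HxL Hxabc].
    apply andb_prop in Hxabc as [Hxab Hxc]; apply andb_prop in Hxab as [Hxa Hxb].
    exists x; auto.
Qed.

Section MinMaxSelection.

Context {A I : Type} {L : list A} {Q : I -> Prop} {mem : I -> A -> bool}.
Hypothesis members_meet : forall i, Q i -> exists x, In x L /\ mem i x = true.

Lemma member_argmax (h : A -> R) (i : I) : Q i ->
  exists x, In x L /\ mem i x = true /\
    forall y, In y L -> mem i y = true -> h y <= h x.
Proof.
  intros Hi.
  destruct (members_meet i Hi) as [x0 Hx0].
  assert (Hne : filter (mem i) L <> []).
  { intro E. apply (filter_In (mem i) x0 L) in Hx0. rewrite E in Hx0. destruct Hx0. }
  destruct (argmax_exists (filter (mem i) L) h Hne) as [x [Hx Hmax]].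
  apply filter_In in Hx as [HxL Hxi].
  exists x; repeat split; auto.
  intros y HyL Hyi. apply Hmax, filter_In; auto.
Qed.

Lemma minmax_selection (h : A -> R) (g : I -> R) :
  (forall i x, mem i x = true -> h x <= g i) ->
  (exists i, Q i) ->
  exists i0 v, Q i0 /\
    (forall x, In x L -> mem i0 x = true -> h x <= v) /\
    (forall i, Q i -> v <= g i).
Proof.
  intros Hg [i1 Hi1].
  set (bounds := fun v => exists i, Q i /\ forall x, In x L -> mem i x = true -> h x <= v).
  destruct (member_argmax h i1 Hi1) as [x1 [Hx1 [_ Hmax1]]].
  destruct (least_value_attained (map h L) bounds) as [v [_ [[i0 [Hi0 Hbelow]] Hleast]]].
  { exists (h x1); split; [apply in_map; assumption | exists i1; auto]. }
  exists i0, v; repeat split; auto.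
  intros i Hi.
  destruct (member_argmax h i Hi) as [x [HxL [Hxi Hmax]]].
  assert (v <= h x) by (apply Hleast; [apply in_map; assumption | exists i; auto]).
  pose proof (Hg i x Hxi); lra.
Qed.

End MinMaxSelection.

Definition heavy (P : list pt) (t : R * R * R) : Prop :=
  let '(t1, t2, t3) := t in
  down_triangle t1 t2 t3 /\ INR (count_in t1 t2 t3 P) > 2 * INR (length P) / 3.

Definition in_tri_of (t : R * R * R) : pt -> bool :=
  let '(t1, t2, t3) := t in in_trib t1 t2 t3.

Lemma in_trib_in_tri t1 t2 t3 x : in_trib t1 t2 t3 x = true -> in_tri t1 t2 t3 x.
Proof.
  unfold in_trib, in_tri.
  destruct (Rle_dec (dot u1 x) t1), (Rle_dec (dot u2 x) t2), (Rle_dec (dot u3 x) t3);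
    try discriminate; auto.
Qed.

Lemma heavy_count P t : heavy P t ->
  (3 * length (filter (in_tri_of t) P) > 2 * length P)%nat.
Proof.
  destruct t as [[t1 t2] t3]; intros [_ H].
  apply INR_lt. rewrite !mult_INR. unfold count_in in H. simpl. lra.
Qed.

Lemma heavy_meets P t : heavy P t -> exists x, In x P /\ in_tri_of t x = true.
Proof.
  intros Ht. pose proof (heavy_count P t Ht) as Hc.
  destruct (filter (in_tri_of t) P) as [|x F] eqn:E; [simpl in Hc; lia|].
  exists x. apply filter_In. rewrite E. left; reflexivity.
Qed.

Theorem corollary1 (P : list pt) (HP : NoDup P) (Hn : (1 <= length P)%nat) :
  exists p : pt, In p P /\
    forall t1 t2 t3 : R, down_triangle t1 t2 t3 ->
      INR (count_in t1 t2 t3 P) > 2 * INR (length P) / 3 ->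
      in_tri t1 t2 t3 p.
Proof.
  destruct (classic (exists t, heavy P t)) as [Hex|Hnone].
  - pose proof (minmax_selection (heavy_meets P)) as Hsel.
    destruct (Hsel (dot u1) (fun t => fst (fst t))) as [a [v1 [Ha [Ha_below Hv1]]]];
      [intros [[? ?] ?] x Hx; apply in_trib_in_tri in Hx; apply Hx | exact Hex |].
    destruct (Hsel (dot u2) (fun t => snd (fst t))) as [b [v2 [Hb [Hb_below Hv2]]]];
      [intros [[? ?] ?] x Hx; apply in_trib_in_tri in Hx; apply Hx | exact Hex |].
    destruct (Hsel (dot u3) snd) as [c [v3 [Hc [Hc_below Hv3]]]];
      [intros [[? ?] ?] x Hx; apply in_trib_in_tri in Hx; apply Hx | exact Hex |].
    destruct (three_majorities_meet P _ _ _
                (heavy_count P a Ha) (heavy_count P b Hb) (heavy_count P c Hc))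
      as [p [Hp [Hpa [Hpb Hpc]]]].
    exists p; split; [exact Hp|].
    intros t1 t2 t3 Hd Hcount.
    assert (Ht : heavy P (t1, t2, t3)) by (split; assumption).
    specialize (Ha_below p Hp Hpa); specialize (Hb_below p Hp Hpb);
      specialize (Hc_below p Hp Hpc).
    specialize (Hv1 _ Ht); specialize (Hv2 _ Ht); specialize (Hv3 _ Ht); simpl in *.
    repeat split; lra.
  - destruct P as [|p P']; [simpl in Hn; lia|].
    exists p; split; [left; reflexivity|].
    intros t1 t2 t3 Hd Hcount. exfalso. apply Hnone. exists (t1, t2, t3). split; assumption.
Qed.
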